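(* Let $y\in\{0,1\}^m$ be a non-empty binary sequence and $n\ge1$. Then the problems $$\max_{x\in\{0,1\}^n}\binom{x}{y}\qquad\text{and}\qquad \max_{p\in[0,1]^n}\mathbf F(p,y)$$ are equivalent, i.e. they have the same optimal value. Furthermore, given any (possibly non-integral) $p^*\in[0,1]^n$ maximizing $\mathbf F(p,y)$, one can construct an integral $x^*\in\{0,1\}^n$ that maximizes $\mathbf F(x,y)$ over $[0,1]^n$ and consequently also maximizes $\binom{x}{y}$ over $\{0,1\}^n$.
   Context: For binary sequences $f,g$, the binomial coefficient $\binom{f}{g}$ is the number of index sets $S\subseteq\{1,\dots,|f|\}$ with $|S|=|g|$ such that the subsequence of $f$ indexed by $S$ equals $g$ (with $\binom{f}{e}=1$ for the empty sequence $e$). The relaxed binomial coefficient $\mathbf F:[0,1]^n\times\{0,1\}^m\to\mathbb R$ is defined by: if $1\le m\le n$, $\mathbf F(p,v)=\sum_{S\subseteq[n],|S|=m}\prod_{j=1}^m p_{S_j}^{v_j}(1-p_{S_j})^{1-v_j}$ with $S_1<\dots<S_m$ the elements of $S$; if $m=0\le n$, $\mathbf F(p,v)=1$; otherwise $\mathbf F(p,v)=0$. For $x\in\{0,1\}^n$, $\mathbf F(x,y)=\binom{x}{y}$. The first problem is maximum-likelihood decoding of the input of length $n$ of a deletion channel from the observed output $y$. *)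

From HB Require Import structures.
From mathcomp Require Import all_boot all_order all_algebra.
Set Implicit Arguments. Unset Strict Implicit. Unset Printing Implicit Defensive.
Import Order.TTheory GRing.Theory Num.Theory.
Local Open Scope ring_scope.

Definition binom_seq (f g : seq bool) : nat :=
  #|[set S : {set 'I_(size f)} |
      (#|S| == size g) && ([seq nth false f (val i) | i <- enum S] == g)]|.

Definition relaxedF (R : nzRingType) (n : nat) (p : 'I_n -> R) (v : seq bool) : R :=
  if (1 <= size v)%N && (size v <= n)%N then
    \sum_(S : {set 'I_n} | #|S| == size v)
      \prod_(ij <- zip (enum S) v) (p ij.1 ^+ ij.2 * (1 - p ij.1) ^+ (1 - ij.2))
  else if size v == 0%N then 1 else 0.

Definition in_cube (R : realFieldType) (n : nat) (p : 'I_n -> R) : Prop :=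
  forall i, 0 <= p i <= 1.

Definition of_bits (R : nzRingType) (n : nat) (x : n.-tuple bool) : 'I_n -> R :=
  fun i => (tnth x i : nat)%:R.

From HB Require Import structures.
From mathcomp Require Import all_boot all_order all_algebra ring lra.
Import Order.TTheory GRing.Theory Num.Theory.
Set Implicit Arguments. Unset Strict Implicit. Unset Printing Implicit Defensive.
Local Open Scope ring_scope.

(* Each term of F(p, y) is a product in which every p_i occurs at most once, as p_i
   or 1 - p_i, so F is affine in each coordinate.  On [0,1]^n, moving one coordinate
   to the better of 0 and 1 therefore never decreases F, and doing so for every
   coordinate turns any point, in particular a maximizer, into a 0/1 point x with
   F(x) >= F(p).  At a 0/1 point each term is the indicator that the chosen
   positions spell y, so F(x) is the binomial coefficient of x over y. *)

Section Relaxed.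
Variable R : realFieldType.

Definition word_weight (n : nat) (p : 'I_n -> R) (s : seq 'I_n) (v : seq bool) : R :=
  \prod_(ij <- zip s v) (p ij.1 ^+ ij.2 * (1 - p ij.1) ^+ (1 - ij.2)).

Lemma relaxedFE n (p : 'I_n -> R) v :
  relaxedF p v = \sum_(S : {set 'I_n} | #|S| == size v) word_weight p (enum S) v.
Proof.
rewrite /relaxedF; case: ifP => // /negbT; rewrite negb_and -!ltnNge ltnS leqn0.
case/orP=> [/eqP/size0nil -> /= | v_gt_n].
  rewrite (eq_bigl (pred1 set0)) => [|S]; last by rewrite /= cards_eq0.
  by rewrite big_pred1_eq enum_set0 /word_weight big_nil.
rewrite (negbTE (lt0n_neq0 (leq_ltn_trans (leq0n n) v_gt_n))) big_pred0 // => S.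
by apply: contraTF v_gt_n => /eqP <-; rewrite -leqNgt -[X in (_ <= X)%N]card_ord max_card.
Qed.

Lemma eq_relaxedF n (p q : 'I_n -> R) v : p =1 q -> relaxedF p v = relaxedF q v.
Proof.
move=> pq; rewrite !relaxedFE; apply: eq_bigr => S _.
by apply: eq_bigr => ij _; rewrite pq.
Qed.

Lemma relaxedF_cast n1 n2 (e : n1 = n2) (p : 'I_n2 -> R) v :
  relaxedF (p \o cast_ord e) v = relaxedF p v.
Proof. by case: n2 / e p => p; apply: eq_relaxedF => i; rewrite /= cast_ord_id. Qed.

Lemma word_weight_cons n (p : 'I_n -> R) j s b v :
  word_weight p (j :: s) (b :: v) = (if b then p j else 1 - p j) * word_weight p s v.
Proof. by rewrite /word_weight big_cons; case: b; rewrite /= ?expr0 ?expr1 ?mulr1 ?mul1r. Qed.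

Lemma word_weight_notin n (p : 'I_n -> R) s v i c :
  i \notin s -> word_weight [eta p with i |-> c] s v = word_weight p s v.
Proof.
elim: s v => [|j s IHs] [|b v]; try by rewrite /word_weight /= !big_nil.
by rewrite !word_weight_cons inE => /norP[ij /IHs ->] /=; rewrite eq_sym (negbTE ij).
Qed.

Lemma word_weight_affine n (p : 'I_n -> R) s v i : uniq s ->
  word_weight p s v = (1 - p i) * word_weight [eta p with i |-> 0] s v
                      + p i * word_weight [eta p with i |-> 1] s v.
Proof.
elim: s v => [|j s IHs] [|b v]; try by move=> _; rewrite /word_weight /= !big_nil; ring.
rewrite !word_weight_cons /= => /andP[js /IHs ->].
case: (eqVneq j i) => [<- | _]; last by ring.
by rewrite !word_weight_notin //; case: b; ring.
Qed.

Lemma relaxedF_affine n (p : 'I_n -> R) v i :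
  relaxedF p v = (1 - p i) * relaxedF [eta p with i |-> 0] v
                 + p i * relaxedF [eta p with i |-> 1] v.
Proof.
rewrite !relaxedFE !mulr_sumr -big_split; apply: eq_bigr => S _.
exact/word_weight_affine/enum_uniq.
Qed.

Lemma natr_bool_in01 (b : bool) : 0 <= (b%:R : R) <= 1.
Proof. by case: b; rewrite /= ?lexx ?ler01. Qed.

Lemma relaxedF_le_round_coord n (p : 'I_n -> R) v i : in_cube p ->
  exists c : bool, relaxedF p v <= relaxedF [eta p with i |-> (c : nat)%:R] v.
Proof.
move=> /(_ i) /andP[pi_ge0 pi_le1]; rewrite (relaxedF_affine p v i).
set a := relaxedF _ v; set b := relaxedF _ v.
have [ab | ba] := leP a b; [exists true | exists false].
  have : 0 <= (1 - p i) * (b - a) by apply: mulr_ge0; lra.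
  by rewrite -/b; nra.
have : 0 <= p i * (a - b) by apply: mulr_ge0; lra.
by rewrite -/a; nra.
Qed.

Lemma relaxedF_le_round_on n (p : 'I_n -> R) v (s : seq 'I_n) : in_cube p ->
  exists b : 'I_n -> bool,
    relaxedF p v <= relaxedF (fun i => if i \in s then (b i : nat)%:R else p i) v.
Proof.
move=> p_cube; elim: s => [|i s [b IHs]]; first by exists xpred0.
set q := fun j => _ in IHs.
have q_cube : in_cube q.
  by move=> j; rewrite /q; case: ifP => _; [apply: natr_bool_in01 | apply: p_cube].
have [c qc] := relaxedF_le_round_coord v i q_cube.
exists [eta b with i |-> c].
rewrite [X in _ <= X](eq_relaxedF (q := [eta q with i |-> c%:R])) => [|j].
  exact: le_trans IHs qc.
by rewrite /q /= inE; case: eqP.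
Qed.

Lemma relaxedF_le_bits n (p : 'I_n -> R) v : in_cube p ->
  exists x : n.-tuple bool, relaxedF p v <= relaxedF (of_bits R x) v.
Proof.
move=> /(relaxedF_le_round_on v (enum 'I_n)) [b pb].
exists [tuple b i | i < n]; apply: le_trans pb _.
rewrite [X in X <= _](eq_relaxedF (q := of_bits R [tuple b i | i < n])) // => i.
by rewrite mem_enum /of_bits tnth_mktuple.
Qed.

Lemma word_weight_bits (f : seq bool) (s : seq 'I_(size f)) v : size s = size v ->
  word_weight (fun i => (nth false f i : nat)%:R) s v =
  (([seq nth false f (val i) | i <- s] == v) : nat)%:R.
Proof.
elim: s v => [|i s IHs] [|b v] //; first by rewrite /word_weight big_nil.
move=> [/IHs]; rewrite word_weight_cons /= eqseq_cons => ->.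
by case: (nth _ _ _); case: b; case: (_ == v); rewrite /= ?subrr ?subr0 ?mulr1 ?mulr0.
Qed.

Lemma relaxedF_seq (f : seq bool) v :
  relaxedF (fun i : 'I_(size f) => (nth false f i : nat)%:R : R) v = (binom_seq f v)%:R.
Proof.
rewrite relaxedFE (eq_bigr (fun S : {set 'I_(size f)} =>
  (([seq nth false f (val i) | i <- enum S] == v) : nat)%:R))
  => [|S /eqP S_v]; last by apply: word_weight_bits; rewrite -cardE.
rewrite /binom_seq -natr_sum -sum1_card big_mkcond [in RHS]big_mkcond /=.
by congr _%:R; apply: eq_bigr => S _; rewrite inE; case: (_ == _); case: (_ == _).
Qed.

Lemma relaxedF_bits n (x : n.-tuple bool) v :
  relaxedF (of_bits R x) v = (binom_seq x v)%:R.
Proof.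
rewrite -relaxedF_seq -(relaxedF_cast (size_tuple x)).
by apply: eq_relaxedF => i; rewrite /= /of_bits (tnth_nth false).
Qed.

End Relaxed.

Lemma of_bits_in_cube (R : realFieldType) n (x : n.-tuple bool) : in_cube (of_bits R x).
Proof. by move=> i; apply: natr_bool_in01. Qed.

Theorem theorem4 (R : realFieldType) (n : nat) (y : seq bool) :
  (0 < size y)%N -> (0 < n)%N ->
  let M := (\max_(x : n.-tuple bool) binom_seq x y)%N in
  (* the two problems have the same optimal value M *)
  ((forall p : 'I_n -> R, in_cube p -> relaxedF p y <= M%:R) /\
   (exists2 p : 'I_n -> R, in_cube p & relaxedF p y = M%:R)) /\
  (* from any maximizer p* of F one obtains an integral maximizer x* *)
  (forall pstar : 'I_n -> R, in_cube pstar ->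
     (forall p : 'I_n -> R, in_cube p -> relaxedF p y <= relaxedF pstar y) ->
     exists xstar : n.-tuple bool,
       (forall p : 'I_n -> R, in_cube p -> relaxedF p y <= relaxedF (of_bits R xstar) y) /\
       (forall x : n.-tuple bool, (binom_seq x y <= binom_seq xstar y)%N)).
Proof.
move=> _ _ M; split; first split.
- move=> p /(relaxedF_le_bits y) [x px]; apply: le_trans px _.
  by rewrite relaxedF_bits ler_nat (leq_bigmax (F := fun x : n.-tuple bool => binom_seq x y)).
- have tuples_gt0 : (0 < #|{: n.-tuple bool}|)%N.
    by apply/card_gt0P; exists [tuple of nseq n false].
  have [x0 x0_max] := @bigop.eq_bigmax _ (fun x : n.-tuple bool => binom_seq x y) tuples_gt0.
  by exists (of_bits R x0); [exact: of_bits_in_cube | rewrite relaxedF_bits /M x0_max].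
move=> pstar /(relaxedF_le_bits y) [x pstar_x] pstar_max; exists x; split.
  by move=> p /pstar_max /le_trans; apply.
move=> z; rewrite -(ler_nat R) -!relaxedF_bits.
exact: le_trans (pstar_max _ (of_bits_in_cube R z)) pstar_x.
Qed.
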